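(* Let $d\ge1$, $0<c\le\infty$, $X=(0,c)$, $X_{\mathrm{SYM}}=(-c,0)\cup(0,c)$, $\mathbb{X}=(X_{\mathrm{SYM}})^d$. For $i=1,\dots,d$ let $w_i\in C^2(X)$ be strictly positive, $p_i\in C^2(X)$ real-valued and nonvanishing, $q_i\in C^1(X)$ real-valued, $a_i\ge0$ constants, $\mu_i(dx)=w_i(x)dx$ on $X$, $\delta_i=p_i\frac{d}{dx}+q_i$, $\delta_i^*=-p_i\frac{d}{dx}+q_i-p_i\frac{w_i'}{w_i}-p_i'$, $L_i=a_i+\delta_i^*\delta_i$. Assume for each $i$ there is an orthonormal basis $\{\varphi^{(i)}_k:k\in\mathbb{N}\}$ of $L^2(X,\mu_i)$ with $\varphi^{(i)}_k\in C^\infty(X)$, $L_i\varphi^{(i)}_k=\lambda^{(i)}_k\varphi^{(i)}_k$, $\lambda^{(i)}_0<\lambda^{(i)}_1<\dots\to\infty$, $\delta_i\varphi^{(i)}_k\in L^2(X,\mu_i)$ and $\langle\delta_i\varphi^{(i)}_k,\delta_i\varphi^{(i)}_m\rangle_{\mu_i}=\langle\delta_i^*\delta_i\varphi^{(i)}_k,\varphi^{(i)}_m\rangle_{\mu_i}$ for all $k,m$; assume moreover $a_i=\lambda^{(i)}_0$ for every $i$. Extend $w_i,p_i,\varphi^{(i)}_k$ evenly and $q_i$ oddly to $X_{\mathrm{SYM}}$, define $\Phi^{(i)}_n=\frac1{\sqrt2}\varphi^{(i)}_{n/2}$ for even $n$, $\Phi^{(i)}_n=-\frac1{\sqrt2}(\lambda^{(i)}_{(n+1)/2}-a_i)^{-1/2}\delta_i\varphi^{(i)}_{(n+1)/2}$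 for odd $n$, $\Phi_n=\Phi^{(1)}_{n_1}\otimes\cdots\otimes\Phi^{(d)}_{n_d}$ for $n\in\mathbb{N}^d$, with the convention $\Phi_n\equiv0$ if $n\in\mathbb{Z}^d\setminus\mathbb{N}^d$, and $\langle n\rangle_j=\lfloor\frac{n_j+1}2\rfloor$. Let $$D_jf(x)=p_j(x_j)\partial_{x_j}f(x)+q_j(x_j)\tfrac{f(x)+f(\sigma_jx)}{2}+\Big[p_j(x_j)\tfrac{w_j'(x_j)}{w_j(x_j)}+p_j'(x_j)-q_j(x_j)\Big]\tfrac{f(x)-f(\sigma_jx)}{2}$$ ($\sigma_j$ the reflection changing the sign of the $j$th coordinate), and for $\ell\in\mathbb{N}^d$ let $D^\ell=D_1^{\ell_1}\cdots D_d^{\ell_d}$. Then for every $\ell\in\mathbb{N}^d\setminus\{(0,\dots,0)\}$ and $n\in\mathbb{N}^d$, $$D^\ell\Phi_n=(-1)^{|\ell|/2+|(n+1/2)\widetilde{\ell}|}\Big(\prod_{j=1}^d\big(\lambda^{(j)}_{\langle n\rangle_j}-a_j\big)^{\ell_j/2}\Big)\Phi_{n-(-1)^n\widetilde{\ell}},$$ where $|\ell|=\ell_1+\dots+\ell_d$, $\widetilde{\ell}\in\{0,1\}^d$ has $\widetilde{\ell}_j=0$ if $\ell_j$ is even and $\widetilde{\ell}_j=1$ if $\ell_j$ is odd, $(-1)^n\widetilde{\ell}=((-1)^{n_1}\widetilde{\ell}_1,\dots,(-1)^{n_d}\widetilde{\ell}_d)$ and $|(n+1/2)\widetilde{\ell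}|=\sum_{j=1}^d(n_j+1/2)\widetilde{\ell}_j$.
   Context: $\mathbb{N}=\{0,1,2,\dots\}$; $\lfloor\cdot\rfloor$ is the floor function. The exponent $|\ell|/2+|(n+1/2)\widetilde\ell|$ is always an integer. *)

From HB Require Import structures.
From mathcomp Require Import all_boot all_order all_algebra.
From mathcomp Require Import all_classical all_reals all_analysis.
Set Implicit Arguments. Unset Strict Implicit. Unset Printing Implicit Defensive.
Import Order.TTheory GRing.Theory Num.Theory.
Import numFieldNormedType.Exports.
Local Open Scope classical_set_scope.
Local Open Scope ring_scope.

Section Defs.
Variable R : realType.

Definition Xint (c : \bar R) : set R := [set x | 0 < x /\ (x%:E < c)%E].
Definition Xsym (c : \bar R) : set R := [set x | x != 0 /\ Xint c `|x|].
Definition Xbb (d : nat) (c : \bar R) : set 'rV[R]_d :=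
  [set x | forall j : 'I_d, Xsym c (x ord0 j)].

Definition C1_on (D : set R) (f : R -> R) :=
  forall x, D x -> derivable f x 1 /\ {for x, continuous (derive1 f)}.
Definition C2_on (D : set R) (f : R -> R) :=
  forall x, D x -> [/\ derivable f x 1, derivable (derive1 f) x 1
                     & {for x, continuous (derive1 (derive1 f))}].
Definition Cinf_on (D : set R) (f : R -> R) :=
  forall (n : nat) x, D x -> derivable (derive1n n f) x 1.

Definition inner (D : set R) (w f g : R -> R) : \bar R :=
  (\int[lebesgue_measure]_(x in D) (f x * g x * w x)%:E)%E.
Definition L2 (D : set R) (w f : R -> R) : Prop :=
  measurable_fun D f /\ (inner D w f f < +oo)%E.

Definition ONB (D : set R) (w : R -> R) (phi : nat -> R -> R) : Prop :=
  [/\ forall k, L2 D w (phi k),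
      forall k m, inner D w (phi k) (phi m) = ((k == m)%:R)%:E
    & forall f, L2 D w f -> (forall k, inner D w f (phi k) = 0%E) ->
        inner D w f f = 0%E].

Definition delta (p q f : R -> R) : R -> R :=
  fun x => p x * derive1 f x + q x * f x.
Definition delta_star (w p q g : R -> R) : R -> R :=
  fun x => - p x * derive1 g x + q x * g x
           - p x * (derive1 w x / w x) * g x - derive1 p x * g x.
Definition Lop (a : R) (w p q f : R -> R) : R -> R :=
  fun x => a * f x + delta_star w p q (delta p q f) x.

(* even / odd extensions to X_SYM (values at 0 / outside X_SYM are irrelevant) *)
Definition ev (f : R -> R) : R -> R := fun x => f `|x|.
Definition od (f : R -> R) : R -> R := fun x => if 0 <= x then f x else - f (- x).

Definition Phi1 (w p q : R -> R) (a : R) (lam : nat -> R) (phi : nat -> R -> R)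
    (n : nat) : R -> R :=
  if ~~ odd n then fun x => (Num.sqrt 2)^-1 * ev (phi n./2) x
  else fun x => - (Num.sqrt 2)^-1 * (Num.sqrt (lam (n.+1)./2 - a))^-1
                  * od (delta p q (phi (n.+1)./2)) x.

Definition PhiZ (d : nat) (w p q : 'I_d -> R -> R) (a : 'I_d -> R)
    (lam : 'I_d -> nat -> R) (phi : 'I_d -> nat -> R -> R)
    (m : 'I_d -> int) : 'rV[R]_d -> R :=
  fun x => if [forall j, (0 <= m j)%R]
           then \prod_(j < d) Phi1 (w j) (p j) (q j) (a j) (lam j) (phi j)
                   `|m j|%N (x ord0 j)
           else 0.

Definition PhiN (d : nat) w p q a lam phi (n : 'I_d -> nat) : 'rV[R]_d -> R :=
  @PhiZ d w p q a lam phi (fun j => (n j)%:Z).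

Definition upd (d : nat) (x : 'rV[R]_d) (j : 'I_d) (t : R) : 'rV[R]_d :=
  \row_k (if k == j then t else x ord0 k).
Definition refl (d : nat) (j : 'I_d) (x : 'rV[R]_d) := upd x j (- x ord0 j).
Definition partial (d : nat) (j : 'I_d) (f : 'rV[R]_d -> R) (x : 'rV[R]_d) : R :=
  derive1 (fun t => f (upd x j t)) (x ord0 j).

Definition Dop (d : nat) (w p q : 'I_d -> R -> R) (j : 'I_d)
    (f : 'rV[R]_d -> R) : 'rV[R]_d -> R :=
  fun x =>
    let t := x ord0 j in
    let W := ev (w j) in let P := ev (p j) in let Q := od (q j) in
    P t * partial j f x
    + Q t * ((f x + f (refl j x)) / 2)
    + (P t * (derive1 W t / W t) + derive1 P t - Q t) * ((f x - f (refl j x)) / 2).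

Definition Dpow (d : nat) (w p q : 'I_d -> R -> R) (l : 'I_d -> nat)
    (f : 'rV[R]_d -> R) : 'rV[R]_d -> R :=
  foldr (fun j g => iter (l j) (Dop w p q j) g) f (enum 'I_d).

End Defs.

From HB Require Import structures.
From mathcomp Require Import all_boot all_order all_algebra.
From mathcomp Require Import all_classical all_reals all_analysis.
From mathcomp Require Import ring zify measurable_realfun.
Import Order.TTheory GRing.Theory Num.Theory.
Import numFieldNormedType.Exports.
Local Open Scope classical_set_scope.
Local Open Scope ring_scope.

(* Each D_j acts on the tensor product Phi_n through its j-th factor only, where
   it is a one-variable operator D: on even extensions it acts as delta and on
   odd extensions as -delta^*, and it exchanges parities. Since
   delta^* delta phi_k = (lambda_k - a) phi_k, D is a ladder operator:
   D Phi_k = +-sqrt(lambda_<k> - a) Phi_(k - (-1)^k). The ground state is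
   annihilated because |delta phi_0|^2 = <delta^* delta phi_0, phi_0> = 0 and
   delta phi_0 is continuous. Iterating, the index alternates between k and
   k - (-1)^k, and the signs accumulate to (-1)^(|l|/2 + |(n+1/2) l~|). *)

(* The index n - (-1)^n of the paper, except that 0 is sent to 0 instead of -1;
   the corresponding coefficient vanishes anyway. *)
Definition nflip (k : nat) := if odd k then k.+1 else k.-1.

Lemma odd_nflip k : (0 < k)%N -> odd (nflip k) = ~~ odd k.
Proof.
case: k => [//|k _]; rewrite /nflip /=.
by case: ifP => /= h; rewrite ?negbK; [exact: negbTE | exact: negbFE].
Qed.

Lemma nflipK k : (0 < k)%N -> nflip (nflip k) = k.
Proof.
by move=> k0; rewrite {1}/nflip odd_nflip // /nflip; case: (odd k) => //=; lia.
Qed.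

Lemma iter_nflip i k : (0 < k)%N -> iter i nflip k = if odd i then nflip k else k.
Proof.
by move=> k0; elim: i => [|i IH] //=; rewrite IH; case: (odd i); rewrite ?nflipK.
Qed.

Lemma uphalf_nflip k : (0 < k)%N -> (nflip k).+1./2 = k.+1./2.
Proof. by rewrite /nflip; case: (boolP (odd k)) => ok k0; lia. Qed.

Lemma iter_nflip0 i : iter i nflip 0 = 0%N.
Proof. by elim: i => //= i ->. Qed.

(* One summand of |l|/2 + |(n+1/2) l~|. *)
Definition sign_exp (k l : nat) := ((l + (2 * k + 1) * odd l)./2)%N.

Lemma odd_sign_expS k l :
  odd (sign_exp k l.+1) = odd (sign_exp k l + ~~ (odd k (+) odd l)).
Proof.
rewrite /sign_exp /=.
by case: (boolP (odd l)) => ol; case: (boolP (odd k)) => ok; rewrite /= ?muln0 ?muln1; lia.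
Qed.

Section LadderCoefficients.
Context {R : realType}.
Variables (a : R) (lam : nat -> R).

Definition ladder_coef (k : nat) := (-1) ^+ (~~ odd k) * Num.sqrt (lam k.+1./2 - a).

Lemma prod_ladder_coef k l : a = lam 0 ->
  \prod_(i < l) ladder_coef (iter i nflip k)
  = (-1) ^+ sign_exp k l * Num.sqrt (lam k.+1./2 - a) ^+ l.
Proof.
case: (posnP k) => [-> a0|k0 _].
  under eq_bigr do rewrite iter_nflip0.
  rewrite prodr_const card_ord /ladder_coef /= -a0 subrr sqrtr0 mulr0.
  by case: l => [|l]; rewrite ?mulr1 // !expr0n mulr0.
elim: l => [|l IH]; first by rewrite big_ord0 /sign_exp muln0 !expr0 mulr1.
rewrite big_ord_recr /= IH /ladder_coef iter_nflip //.
have -> : (-1) ^+ sign_exp k l.+1 = (-1) ^+ sign_exp k l * (-1) ^+ (~~ (odd k (+) odd l)) :> R.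
  by rewrite -exprD -signr_odd odd_sign_expS signr_odd.
by case: (odd l); rewrite ?odd_nflip ?uphalf_nflip // ?addbT ?addbF ?negbK exprS; ring.
Qed.

End LadderCoefficients.

Lemma half_sum_even (I : finType) (e : I -> nat) : (forall i, ~~ odd (e i)) ->
  ((\sum_i e i)./2 = \sum_i (e i)./2)%N.
Proof.
move=> ee; suff [] : (\sum_i e i)./2 = \sum_i (e i)./2 /\ ~~ odd (\sum_i e i) by [].
apply: (big_ind2 (fun x y => x./2 = y /\ ~~ odd x)) => // x1 y1 x2 y2 [<- o1] [<- o2].
by rewrite halfD oddD (negPf o1) (negPf o2).
Qed.

Lemma iter_nflip_int l k : (k = 0 -> ~~ odd l)%N ->
  (iter l nflip k)%:Z = (k%:Z - (-1) ^+ k * (odd l)%:Z)%R.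
Proof.
case: (posnP k) => [-> /(_ erefl)/negPf ->|k0 _]; first by rewrite iter_nflip0 mulr0 subr0.
rewrite iter_nflip // -signr_odd /nflip.
by case: (odd l); case: (odd k); rewrite /= ?mulr0 ?mulr1 ?mulrN1 ?subr0 ?opprK; lia.
Qed.

Section EvenOddExtension.
Context {R : realType}.
Implicit Types (f : R -> R) (t : R).

Lemma od_sgr f t : t != 0 -> od f t = Num.sg t * f `|t|.
Proof.
rewrite /od neq_lt => /orP[t0|t0].
  by rewrite leNgt t0 /= ltr0_sg // ltr0_norm // mulN1r.
by rewrite ltW // gtr0_sg // gtr0_norm // mul1r.
Qed.

Lemma is_derive_ev {f t} : t != 0 -> derivable f `|t| 1 ->
  is_derive t 1 (ev f) (Num.sg t * derive1 f `|t|).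
Proof.
rewrite neq_lt => /orP[t0|t0] df.
- apply: (@near_eq_is_derive _ _ _ (f \o -%R)).
    by near=> y; rewrite /ev /= ltr0_norm //; near: y; exact: open_lt.
  rewrite (ltr0_norm t0) in df.
  apply: is_derive_eq (is_derive1_comp (derivableP df) (is_deriveNid t 1)) _.
  by rewrite ltr0_sg // ltr0_norm // mulrN1 mulN1r derive1E.
- apply: (@near_eq_is_derive _ _ _ f).
    by near=> y; rewrite /ev gtr0_norm //; near: y; exact: open_gt.
  rewrite (gtr0_norm t0) in df.
  apply: is_derive_eq (derivableP df) _.
  by rewrite gtr0_sg // gtr0_norm // mul1r derive1E.
Unshelve. all: by end_near. Qed.

Lemma is_derive_od {f t} : t != 0 -> derivable f `|t| 1 ->
  is_derive t 1 (od f) (derive1 f `|t|).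
Proof.
rewrite neq_lt => /orP[t0|t0] df.
- apply: (@near_eq_is_derive _ _ _ (- (f \o -%R))).
    near=> y; rewrite /od /= ifF //; apply/negbTE; rewrite -ltNge.
    by near: y; exact: open_lt.
  rewrite (ltr0_norm t0) in df.
  apply: is_derive_eq (is_deriveN (is_derive1_comp (derivableP df) (is_deriveNid t 1))) _.
  by rewrite ltr0_norm // mulrN1 opprK derive1E.
- apply: (@near_eq_is_derive _ _ _ f).
    by near=> y; rewrite /od ifT //; apply: ltW; near: y; exact: open_gt.
  rewrite (gtr0_norm t0) in df.
  apply: is_derive_eq (derivableP df) _.
  by rewrite (gtr0_norm t0) derive1E.
Unshelve. all: by end_near. Qed.

End EvenOddExtension.

Section OneDimOperator.
Context {R : realType}.
Variables (w p q : R -> R).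
Implicit Types (g h G : R -> R) (t r : R).

Definition Dop1 G t :=
  ev p t * derive1 G t + od q t * ((G t + G (- t)) / 2)
  + (ev p t * (derive1 (ev w) t / ev w t) + derive1 (ev p) t - od q t)
    * ((G t - G (- t)) / 2).

Lemma Dop1Z G r t : derivable G t 1 -> Dop1 (fun x => r * G x) t = r * Dop1 G t.
Proof. by move=> dG; rewrite /Dop1 derive1Ml //; ring. Qed.

Lemma Dop1_ev g t : t != 0 -> derivable g `|t| 1 -> Dop1 (ev g) t = od (delta p q g) t.
Proof.
move=> t0 dg; have [_ Dg] := is_derive_ev t0 dg.
by rewrite /Dop1 derive1E Dg !od_sgr // /ev /delta normrN subrr mul0r mulr0 addr0; field.
Qed.

Lemma Dop1_od h t : t != 0 -> derivable h `|t| 1 ->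
  derivable w `|t| 1 -> derivable p `|t| 1 ->
  Dop1 (od h) t = - ev (delta_star w p q h) t.
Proof.
move=> t0 dh dw dp.
have [_ Dh] := is_derive_od t0 dh; have [_ Dw] := is_derive_ev t0 dw.
have [_ Dp] := is_derive_ev t0 dp.
have Nt0 : - t != 0 by rewrite oppr_eq0.
rewrite /Dop1 !derive1E Dh Dw Dp !od_sgr // sgrN normrN /ev /delta_star.
set iw := (w `|t|)^-1. (* keeps [field] from requiring [w `|t| != 0] *)
by case: (sgrP t) t0 => // _ _; field.
Qed.

End OneDimOperator.

Lemma continuous_ge0_integral_eq0 {R : realType} {X : set R} {g : R -> R} :
  open X -> (forall x, X x -> {for x, continuous g}) ->
  (forall x, X x -> 0 <= g x) ->
  (\int[lebesgue_measure]_(x in X) (g x)%:E = 0)%E ->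
  forall u, X u -> g u = 0.
Proof.
move=> oX cg g0 I0 u Xu; apply/eqP; rewrite eq_le g0 // andbT leNgt; apply/negP => gu.
have mX : measurable X by exact: open_measurable.
have mg : measurable_fun X (fun x => (g x)%:E).
  apply/measurable_EFinP; apply: (open_continuous_measurable_fun oX) => x.
  by rewrite inE; exact: cg.
pose e := g u / 2.
have e0 : 0 < e by rewrite divr_gt0.
have : \forall x \near u, X x /\ e < g x.
  have eg : e < g u by rewrite /e ltr_pdivrMr // ltr_pMr // ltr1n.
  near=> x; split; first by near: x; exact: oX.
  by near: x; apply: (@cvgr_gt R _ _ _ g (g u) (cg u Xu) e eg).
move=> /nbhs_ballP[r /= r0 Hr].
have BX : ball u r `<=` X by move=> x /Hr[].
have : ((e * (r *+ 2))%:E <= 0)%E.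
  rewrite -I0 EFinM -(lebesgue_measure_ball u (ltW r0)) -integral_cst //;
    last exact: measurable_ball.
  apply: (@le_trans _ _ (\int[lebesgue_measure]_(x in ball u r) (g x)%:E)%E).
    apply: ge0_le_integral => //.
    - exact: measurable_ball.
    - by move=> x _; rewrite lee_fin ltW.
    - exact: measurable_funS mX BX mg.
    - by move=> x /Hr[_ /ltW]; rewrite lee_fin.
  by apply: ge0_subset_integral => //; exact: measurable_ball.
by rewrite lee_fin leNgt => /negP; apply; rewrite mulr_gt0 // pmulrn_lgt0.
Unshelve. all: by end_near. Qed.

Lemma open_Xint {R : realType} (c : \bar R) : open (Xint c).
Proof.
have -> : Xint c = [set x | 0 < x] `&` [set x : R | (x%:E < c)%E] by [].
apply: openI; first exact: open_gt.
case: c => [r||].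
- have -> : [set x : R | (x%:E < r%:E)%E] = [set x | x < r].
    by apply/seteqP; split => x /=; rewrite lte_fin.
  exact: open_lt.
- have -> : [set x : R | (x%:E < +oo)%E] = setT.
    by apply/seteqP; split => x //= _; rewrite ltry.
  exact: openT.
- have -> : [set x : R | (x%:E < -oo)%E] = set0.
    by apply/seteqP; split => x //=; rewrite ltNge leNye.
  exact: open0.
Qed.

Lemma open_Xsym {R : realType} (c : \bar R) : open (Xsym c).
Proof.
have -> : Xsym c = Num.norm @^-1` Xint c.
  apply/seteqP; split=> [t [] //|t Xt]; split=> //.
  by rewrite -normr_gt0; case: Xt.
by apply: open_comp (open_Xint c) => t _; exact: norm_continuous.
Qed.

Lemma Xsym_opp {R : realType} (c : \bar R) (t : R) : Xsym c t -> Xsym c (- t).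
Proof. by case=> t0 Xt; split; rewrite ?oppr_eq0 ?normrN. Qed.

Lemma Xbb_upd {R : realType} {d : nat} (c : \bar R) (y : 'rV[R]_d) (j : 'I_d) (t : R) :
  Xbb c y -> Xsym c t -> Xbb c (upd y j t).
Proof. by move=> Yy St i; rewrite mxE; case: eqVneq. Qed.

Section OneDimLadder.
Context {R : realType}.
Variables (c : \bar R) (w p q : R -> R) (a : R) (lam : nat -> R) (phi : nat -> R -> R).
Local Notation X := (Xint c).
Local Notation Phi1 := (Phi1 w p q a lam phi).
Hypothesis hw : C2_on X w.
Hypothesis w_gt0 : forall x, X x -> 0 < w x.
Hypothesis hp : C2_on X p.
Hypothesis hq : C1_on X q.
Hypothesis hphi : forall k, Cinf_on X (phi k).
Hypothesis heigen : forall k x, X x -> Lop a w p q (phi k) x = lam k * phi k x.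
Hypothesis lam_inc : {homo lam : k m / (k < m)%N >-> k < m}.
Hypothesis a_lam0 : a = lam 0.
Hypothesis hground : inner X w (delta p q (phi 0)) (delta p q (phi 0))
  = inner X w (delta_star w p q (delta p q (phi 0))) (phi 0).

Lemma derivable_delta k u : X u -> derivable (delta p q (phi k)) u 1.
Proof.
move=> Xu; have [dp _ _] := hp u Xu; have [dq _] := hq u Xu.
exact: derivableD (derivableM dp (hphi k 1 u Xu)) (derivableM dq (hphi k 0 u Xu)).
Qed.

Lemma delta_star_delta k u : X u ->
  delta_star w p q (delta p q (phi k)) u = (lam k - a) * phi k u.
Proof. by move=> Xu; rewrite mulrBl -heigen // /Lop; ring. Qed.

Lemma delta_phi0_eq0 u : X u -> delta p q (phi 0) u = 0.
Proof.
pose h := delta p q (phi 0).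
have dh x : X x -> derivable h x 1 := derivable_delta 0 x.
move=> Xu; have : h u * h u * w u = 0.
  have := continuous_ge0_integral_eq0 (g := fun y => h y * h y * w y) (open_Xint c).
  apply=> // [x Xx|x Xx|].
  - have [dw _ _] := hw x Xx.
    apply/differentiable_continuous/derivable1_diffP.
    exact: derivableM (derivableM (dh x Xx) (dh x Xx)) dw.
  - by rewrite -expr2 mulr_ge0 ?sqr_ge0 // ltW // w_gt0.
  rewrite -[LHS]/(inner X w h h) hground /inner (eq_integral (cst 0%E)) ?integral0 //.
  by move=> x /[!inE] Xx; rewrite delta_star_delta // a_lam0 subrr !mul0r.
by move/eqP; rewrite !mulf_eq0 orbb (gt_eqF (w_gt0 u Xu)) orbF => /eqP.
Qed.

Lemma sqrt_gap_neq0 m : (0 < m)%N -> Num.sqrt (lam m - a) != 0.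
Proof. by move=> m0; rewrite sqrtr_eq0 -ltNge a_lam0 subr_gt0 lam_inc. Qed.

Lemma sqr_sqrt_gap m : (0 < m)%N -> Num.sqrt (lam m - a) ^+ 2 = lam m - a.
Proof. by move=> m0; rewrite sqr_sqrtr // a_lam0 subr_ge0 ltW // lam_inc. Qed.

Lemma Phi1_double m : Phi1 m.*2 = fun x => (Num.sqrt 2)^-1 * ev (phi m) x.
Proof. by rewrite /Phi1 odd_double /= doubleK. Qed.

Lemma Phi1_doubleS m : Phi1 m.*2.+1 = fun x =>
  - (Num.sqrt 2)^-1 * (Num.sqrt (lam m.+1 - a))^-1 * od (delta p q (phi m.+1)) x.
Proof. by rewrite /Phi1 /= odd_double /= doubleK. Qed.

Lemma derivable_Phi1 k t : Xsym c t -> derivable (Phi1 k) t 1.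
Proof.
move=> [t0 Xt]; rewrite /Phi1; case: ifP => _; apply: derivableM => //.
  by have [] := is_derive_ev t0 (hphi k./2 0 _ Xt).
by have [] := is_derive_od t0 (derivable_delta k.+1./2 _ Xt).
Qed.

Lemma Dop1_Phi1 k t : Xsym c t ->
  Dop1 w p q (Phi1 k) t = ladder_coef a lam k * Phi1 (nflip k) t.
Proof.
move=> [t0 Xt]; have [dw _ _] := hw _ Xt; have [dp _ _] := hp _ Xt.
have s2 : Num.sqrt 2 != 0 :> R by rewrite sqrtr_eq0 -ltNge.
rewrite /ladder_coef /nflip; move: (odd_double_half k).
case: (odd k); move: k./2 => m <-.
- rewrite add1n Phi1_doubleS Dop1Z; last first.
    by have [] := is_derive_od t0 (derivable_delta m.+1 _ Xt).
  rewrite (Dop1_od _ _ _ _ _ t0 (derivable_delta _ _ Xt) dw dp) -doubleS doubleK.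
  rewrite Phi1_double /ev delta_star_delta //.
  have := sqr_sqrt_gap _ (ltn0Sn m); have := sqrt_gap_neq0 _ (ltn0Sn m).
  set S := Num.sqrt (lam _ - a) => S0 <-.
  by field; rewrite s2 S0.
- rewrite add0n Phi1_double Dop1Z; last by have [] := is_derive_ev t0 (hphi m 0 _ Xt).
  rewrite (Dop1_ev _ _ _ (phi m) _ t0 (hphi _ 0 _ Xt)) (half_bit_double m true).
  case: m => [|m].
    by rewrite od_sgr // delta_phi0_eq0 // -a_lam0 subrr sqrtr0 !(mulr0, mul0r).
  rewrite doubleS /= Phi1_doubleS.
  by field; rewrite s2 sqrt_gap_neq0.
Qed.

End OneDimLadder.

Section TensorProduct.
Context {R : realType} {d : nat}.
Implicit Types (y z : 'rV[R]_d) (j : 'I_d) (m : 'I_d -> nat).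

Lemma upd_same y j t : upd y j t ord0 j = t.
Proof. by rewrite mxE eqxx. Qed.

Lemma upd_other y j t i : i != j -> upd y j t ord0 i = y ord0 i.
Proof. by move=> ij; rewrite mxE (negbTE ij). Qed.

Lemma upd_id y j : upd y j (y ord0 j) = y.
Proof. by apply/rowP => i; rewrite mxE; case: eqVneq => // ->. Qed.

Variables (w p q : 'I_d -> R -> R).

Lemma Dop_separable j (f : 'rV[R]_d -> R) (G : R -> R) r y :
  derivable G (y ord0 j) 1 ->
  (\forall u \near y ord0 j, f (upd y j u) = G u * r) ->
  f (refl j y) = G (- y ord0 j) * r ->
  Dop w p q j f y = Dop1 (w j) (p j) (q j) G (y ord0 j) * r.
Proof.
move=> dG fG fGN.
have fy : f y = G (y ord0 j) * r by rewrite -{1}(upd_id y j); exact: (nbhs_singleton fG).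
have f' : partial j f y = derive1 G (y ord0 j) * r.
  by rewrite /partial derive1E (near_eq_derive _ fG) -derive1E derive1Mr.
rewrite /Dop /Dop1 f' fy fGN; set B := (_ + _ - _); ring.
Qed.

Variables (a : 'I_d -> R) (lam : 'I_d -> nat -> R) (phi : 'I_d -> nat -> R -> R).
Local Notation F j := (Phi1 (w j) (p j) (q j) (a j) (lam j) (phi j)).
Local Notation PhiN := (PhiN w p q a lam phi).

Lemma PhiN_factor m y j :
  PhiN m y = F j (m j) (y ord0 j) * \prod_(i | i != j) F i (m i) (y ord0 i).
Proof.
rewrite /PhiN /PhiZ (bigD1 j) //=.
by have -> : [forall i, (0 <= (m i)%:Z)%R] by apply/forallP.
Qed.

Lemma PhiN_upd m y j t :
  PhiN m (upd y j t) = F j (m j) t * \prod_(i | i != j) F i (m i) (y ord0 i).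
Proof.
rewrite (PhiN_factor _ _ j) upd_same; congr (_ * _).
by apply: eq_bigr => i ij; rewrite upd_other.
Qed.

Lemma PhiN_dfwith m y j k :
  PhiN (dfwith m j k) y = F j k (y ord0 j) * \prod_(i | i != j) F i (m i) (y ord0 i).
Proof.
rewrite (PhiN_factor _ _ j) dfwithin; congr (_ * _).
by apply: eq_bigr => i ij; rewrite dfwithout // eq_sym.
Qed.

Variable c : \bar R.
Hypothesis derivable_F : forall j k t, Xsym c t -> derivable (F j k) t 1.
Hypothesis Dop1_F : forall j k t, Xsym c t ->
  Dop1 (w j) (p j) (q j) (F j k) t = ladder_coef (a j) (lam j) k * F j (nflip k) t.

Lemma Dop_PhiN j (g : 'rV[R]_d -> R) s m y :
  (forall z, Xbb c z -> g z = s * PhiN m z) -> Xbb c y ->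
  Dop w p q j g y = s * ladder_coef (a j) (lam j) (m j) * PhiN (dfwith m j (nflip (m j))) y.
Proof.
move=> gE Yy; set r := \prod_(i | i != j) F i (m i) (y ord0 i).
rewrite (Dop_separable j g (F j (m j)) (s * r) y (derivable_F _ _ _ (Yy j))).
- by rewrite Dop1_F // PhiN_dfwith -/r; ring.
- near=> u; rewrite gE; first by rewrite PhiN_upd -/r; ring.
  by apply: Xbb_upd => //; near: u; exact: open_Xsym.
- rewrite gE; first by rewrite PhiN_upd -/r; ring.
  by apply: Xbb_upd => //; exact: Xsym_opp.
Unshelve. all: by end_near. Qed.

Lemma iter_Dop_PhiN j k (g : 'rV[R]_d -> R) s m :
  (forall z, Xbb c z -> g z = s * PhiN m z) -> forall z, Xbb c z ->
  iter k (Dop w p q j) g z =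
  s * (\prod_(i < k) ladder_coef (a j) (lam j) (iter i nflip (m j)))
    * PhiN (dfwith m j (iter k nflip (m j))) z.
Proof.
move=> gE; elim: k => [|k IH] z Yz.
  by rewrite /= big_ord0 mulr1 gE //; congr (_ * PhiN _ _); apply/funext => i; case: dfwithP.
rewrite iterS (Dop_PhiN _ _ _ _ _ IH Yz) dfwithin big_ord_recr !mulrA.
congr (_ * PhiN _ _); apply/funext => i.
by case: dfwithP => [|i' ji]; rewrite ?dfwithin ?dfwithout.
Qed.

Lemma Dpow_PhiN l n z : Xbb c z ->
  Dpow w p q l (PhiN n) z =
  (\prod_j \prod_(i < l j) ladder_coef (a j) (lam j) (iter i nflip (n j)))
  * PhiN (fun j => iter (l j) nflip (n j)) z.
Proof.
suff foldr_Dop (r : seq 'I_d) : uniq r -> forall z, Xbb c z ->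
    foldr (fun j g => iter (l j) (Dop w p q j) g) (PhiN n) r z =
    (\prod_(j <- r) \prod_(i < l j) ladder_coef (a j) (lam j) (iter i nflip (n j)))
    * PhiN (fun j => if j \in r then iter (l j) nflip (n j) else n j) z.
  move=> Yz; rewrite /Dpow foldr_Dop ?enum_uniq // big_enum /=.
  by congr (_ * PhiN _ _); apply/funext => j; rewrite mem_enum.
elim: r => [_ y _|j r IH /andP[jr ur] y Yy] /=.
  by rewrite big_nil mul1r.
rewrite (iter_Dop_PhiN _ _ _ _ _ (IH ur)) // ifN // big_cons.
congr (_ * PhiN _ _); first exact: mulrC.
apply/funext => i; rewrite in_cons.
by case: dfwithP => [|i' ji]; rewrite ?eqxx // eq_sym (negPf ji).
Qed.

End TensorProduct.

Theorem mainTheorem6 (R : realType) (d : nat) (c : \bar R)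
  (w p q : 'I_d -> R -> R) (a : 'I_d -> R)
  (phi : 'I_d -> nat -> R -> R) (lam : 'I_d -> nat -> R) :
  (1 <= d)%N ->
  (0 < c)%E ->
  (forall i, C2_on (Xint c) (w i) /\ forall x, Xint c x -> 0 < w i x) ->
  (forall i, C2_on (Xint c) (p i) /\ forall x, Xint c x -> p i x != 0) ->
  (forall i, C1_on (Xint c) (q i)) ->
  (forall i, 0 <= a i) ->
  (forall i, ONB (Xint c) (w i) (phi i)) ->
  (forall i k, Cinf_on (Xint c) (phi i k)) ->
  (forall i k x, Xint c x ->
     Lop (a i) (w i) (p i) (q i) (phi i k) x = lam i k * phi i k x) ->
  (forall i, {homo lam i : k m / (k < m)%N >-> k < m}) ->
  (forall i, lam i n @[n --> \oo] --> +oo) ->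
  (forall i k, L2 (Xint c) (w i) (delta (p i) (q i) (phi i k))) ->
  (forall i k m,
     inner (Xint c) (w i) (delta (p i) (q i) (phi i k)) (delta (p i) (q i) (phi i m))
     = inner (Xint c) (w i)
         (delta_star (w i) (p i) (q i) (delta (p i) (q i) (phi i k))) (phi i m)) ->
  (forall i, a i = lam i 0%N) ->
  forall (l n : 'I_d -> nat), (exists j, l j != 0%N) ->
  forall x : 'rV[R]_d, Xbb c x ->
    Dpow w p q l (PhiN w p q a lam phi n) x =
      (-1) ^+ ((\sum_(j < d) (l j + (2 * n j + 1) * odd (l j)))./2)
      * (\prod_(j < d) Num.sqrt (lam j (n j).+1./2 - a j) ^+ l j)
      * PhiZ w p q a lam phi
          (fun j => (n j)%:Z - (-1) ^+ (n j) * (odd (l j))%:Z) x.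
Proof.
move=> _ _ hw hp hq _ _ hphi heigen lam_inc _ _ hground a_lam0 l n _ x Xx.
have ladder j := Dop1_Phi1 c (w j) (p j) (q j) (a j) (lam j) (phi j) (hw j).1 (hw j).2
  (hp j).1 (hq j) (hphi j) (heigen j) (lam_inc j) (a_lam0 j) (hground j 0%N 0%N).
have dPhi1 j :=
  derivable_Phi1 c (w j) (p j) (q j) (a j) (lam j) (phi j) (hp j).1 (hq j) (hphi j).
rewrite (Dpow_PhiN w p q a lam phi c dPhi1 ladder l n x Xx).
rewrite (eq_bigr _ (fun j _ => prod_ladder_coef (a j) (lam j) (n j) (l j) (a_lam0 j))).
rewrite big_split /= prodrXr -half_sum_even; last first.
  by move=> j; rewrite oddD oddM oddD mul2n odd_double oddb /= addbb.
case: (pickP (fun j => (n j == 0)%N && odd (l j))) => [j0 /andP[/eqP n0 lo]|hnone].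
  have -> : \prod_(j < d) Num.sqrt (lam j (n j).+1./2 - a j) ^+ l j = 0.
    rewrite (bigD1 j0) //= n0 -a_lam0 subrr sqrtr0 expr0n.
    by case: (l j0) lo => //= _ _; rewrite mul0r.
  by rewrite !(mulr0, mul0r).
congr (_ * PhiZ _ _ _ _ _ _ _ _); apply/funext => j; apply: iter_nflip_int => nj0.
by have := hnone j; rewrite nj0 eqxx => /negbT.
Qed.
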